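(* Let $z\ge 0$ and let $C_1,F_1,\dots,C_\ell,F_\ell$ be a $z$-antler-sequence for an undirected multigraph $G$. Then for every $1\le i\le\ell$, the pair $(C_1\cup\dots\cup C_i,\;F_1\cup\dots\cup F_i)$ is a $z$-antler in $G$.
   Context: A feedback vertex set (FVS) of $G$ is a set $X\subseteq V(G)$ with $G-X$ acyclic (self-loops and pairs of parallel edges count as cycles); $\mathrm{fvs}(G)$ is the minimum size of a FVS. For disjoint $X,Y$, $e(X,Y)$ is the number of edges between $X$ and $Y$. A feedback vertex cut (FVC) in $G$ is a pair of disjoint sets $C,F\subseteq V(G)$ such that $G[F]$ is a forest and every tree $T$ of $G[F]$ satisfies $e(V(T),V(G)\setminus(C\cup F))\le1$. An antler is a FVC $(C,F)$ with $|C|\le\mathrm{fvs}(G[C\cup F])$. For $C\subseteq V(G)$, a $C$-certificate is a subgraph $H$ of $G$ such that $C$ is a minimum FVS of $H$; it has order $z$ if every component $H'$ of $H$ satisfies $\mathrm{fvs}(H')=|C\cap V(H')|\le z$. A $z$-antler is an antler $(C,F)$ such that $G[C\cup F]$ contains a $C$-certificate of order $z$. A $z$-antler-sequence for $G$ is a sequence of pairwise disjoint vertex sets $C_1,F_1,\dots,C_\ell,F_\ell$ such that for each $i$, $(C_i,F_i)$ is a $z$-antler in $G-\bigcup_{j<i}(C_j\cup F_j)$. *)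

From mathcomp Require Import all_boot.
Set Implicit Arguments. Unset Strict Implicit. Unset Printing Implicit Defensive.

(* A finite undirected multigraph on a vertex set V : {set T} is given by a
   symmetric multiplicity function m : T -> T -> nat; m x y = number of edges
   between x and y (m x x = number of self-loops at x).  The graph G[S] induced
   on S ⊆ V uses m restricted to S × S.  G - X is the graph induced on V :\: X. *)

Section Multigraph.
Variable T : finType.
Implicit Types (V S X C F : {set T}) (m : T -> T -> nat).

Definition adj S m : rel T := fun x y => [&& x \in S, y \in S & 0 < m x y].

(* the multigraph (S, m|S) contains a cycle: a self-loop, a pair of parallel
   edges, or a cycle through >= 3 distinct vertices *)
Definition has_cycle S m : Prop :=
  (exists2 x, x \in S & 0 < m x x) \/
  (exists x y, [/\ x \in S, y \in S, x != y & 1 < m x y]) \/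
  (exists s : seq T, [/\ 3 <= size s, uniq s, {subset s <= S} & cycle (adj S m) s]).

Definition acyclic S m : Prop := ~ has_cycle S m.

Definition is_fvs S m X : Prop := X \subset S /\ acyclic (S :\: X) m.

Definition fvs_ge S m (k : nat) : Prop := forall X, is_fvs S m X -> k <= #|X|.

Definition fvs_is S m (k : nat) : Prop :=
  fvs_ge S m k /\ exists2 X, is_fvs S m X & #|X| = k.

Definition comp S m x : {set T} := [set y in S | connect (adj S m) x y].

Definition ecount m (A B : {set T}) : nat := \sum_(x in A) \sum_(y in B) m x y.

Definition fvc V m C F : Prop :=
  [/\ C :|: F \subset V, [disjoint C & F], acyclic F m &
      forall x, x \in F -> ecount m (comp F m x) (V :\: (C :|: F)) <= 1].

Definition antler V m C F : Prop := fvc V m C F /\ fvs_ge (C :|: F) m #|C|.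

Definition subgraph S m (VH : {set T}) (mH : T -> T -> nat) : Prop :=
  [/\ VH \subset S,
      forall x y, mH x y = mH y x,
      forall x y, mH x y <= m x y &
      forall x y, 0 < mH x y -> x \in VH /\ y \in VH].

Definition certificate_of_order (z : nat) C (VH : {set T}) (mH : T -> T -> nat) : Prop :=
  [/\ is_fvs VH mH C, fvs_ge VH mH #|C| &
      forall x, x \in VH ->
        fvs_is (comp VH mH x) mH #|C :&: comp VH mH x| /\
        #|C :&: comp VH mH x| <= z].

Definition z_antler V m (z : nat) C F : Prop :=
  antler V m C F /\
  exists VH mH, subgraph (C :|: F) m VH mH /\ certificate_of_order z C VH mH.

(* C_0, F_0, ..., C_(l-1), F_(l-1) is a z-antler-sequence for (V, m) *)
Definition antler_seq V m (z l : nat) (C F : nat -> {set T}) : Prop :=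
  (forall i j, i < l -> j < l -> i != j ->
     [/\ [disjoint C i & C j], [disjoint F i & F j] & [disjoint C i & F j]]) /\
  (forall i, i < l -> [disjoint C i & F i]) /\
  (forall i, i < l ->
     z_antler (V :\: \bigcup_(j < i) (C j :|: F j)) m z (C i) (F i)).

End Multigraph.

From mathcomp Require Import all_boot.
Set Implicit Arguments. Unset Strict Implicit. Unset Printing Implicit Defensive.

(* By induction on i it suffices to compose two antlers: (C1, F1) a z-antler
   of G and (C2, F2) a z-antler of G - (C1 u F1).  The forest F2 lies in
   R1 = V - (C1 u F1), to which every tree of G[F1] sends at most one edge.
   So a cycle of G[F1 u F2] meeting a tree A of G[F1] without staying in it
   would leave A twice towards R1, and a tree of G[F1 u F2] is either inside a
   tree of G[F1], or a tree of G[F2] together with F1-trees whose unique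
   outgoing edge goes into it; in both cases it inherits the edge bound of an
   antler.  Feedback vertex sets restrict to the disjoint blocks C1 u F1 and
   C2 u F2, so the lower bounds |C1| and |C2| add up, and the disjoint sum of
   the two certificates is a certificate of order z for C1 u C2. *)

Section Antlers.
Variable T : finType.
Implicit Types (S U V A B C F X : {set T}) (m : T -> T -> nat) (s : seq T).

Lemma leq_sum_subset A A' (G : T -> nat) :
  A \subset A' -> \sum_(x in A) G x <= \sum_(x in A') G x.
Proof.
move=> /subsetP sA.
by apply: (sub_le_big (op := addn) leqnn (fun x y => leq_addr y x)) => x /sA.
Qed.

Lemma ecount_mono m A A' B B' : A \subset A' -> B \subset B' ->
  ecount m A B <= ecount m A' B'.
Proof.
move=> sA sB; apply: leq_trans (leq_sum_subset _ sA).
by apply: leq_sum => x _; apply: leq_sum_subset.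
Qed.

Lemma ecount_ge m A B x y : x \in A -> y \in B -> m x y <= ecount m A B.
Proof.
by move=> xA yB; rewrite /ecount (bigD1 x xA) (bigD1 y yB) /= -addnA leq_addr.
Qed.

Lemma ecount_ge2 m A B x y x' y' : x \in A -> y \in B -> x' \in A -> y' \in B ->
  (x, y) != (x', y') -> m x y + m x' y' <= ecount m A B.
Proof.
move=> xA yB x'A y'B neq; rewrite /ecount pair_big_dep /=.
rewrite (bigD1 (x, y)) /=; last by rewrite xA yB.
by rewrite (bigD1 (x', y')) /= ?addnA ?leq_addr // x'A y'B eq_sym neq.
Qed.

Lemma ecount_le1_edge_eq m A B x y x' y' : ecount m A B <= 1 ->
  x \in A -> y \in B -> x' \in A -> y' \in B -> 0 < m x y -> 0 < m x' y' ->
  (x, y) = (x', y').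
Proof.
move=> le1 xA yB x'A y'B xy x'y'; apply/eqP; apply: contraTT le1 => neq.
by rewrite -ltnNge (leq_trans (leq_add xy x'y')) ?ecount_ge2.
Qed.

Lemma comp_self S m x : x \in S -> x \in comp S m x.
Proof. by move=> xS; rewrite inE xS connect0. Qed.

Lemma comp_subset S m x : comp S m x \subset S.
Proof. by apply/subsetP => y /setIdP []. Qed.

Lemma comp_closed S m x y z :
  y \in comp S m x -> z \in S -> 0 < m y z -> z \in comp S m x.
Proof.
case/setIdP=> yS xy zS yz; rewrite inE zS.
by apply: connect_trans xy (connect1 _); rewrite /adj yS zS yz.
Qed.

Lemma comp_min S m x U : x \in U ->
  (forall y z, y \in comp S m x -> y \in U -> z \in S -> 0 < m y z -> z \in U) ->
  comp S m x \subset U.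
Proof.
move=> xU closedU.
suff walk p a : connect (adj S m) x a -> a \in U -> path (adj S m) a p ->
    last a p \in U.
  by apply/subsetP => _ /setIdP [_ /connectP [p xp ->]]; apply: walk.
elim: p a => [|b p IH] a //= xa aU /andP [/and3P [aS bS ab] bp].
have xb : connect (adj S m) x b.
  by apply: connect_trans xa (connect1 _); rewrite /adj aS bS ab.
by apply: IH bp; rewrite // (closedU a) // inE aS.
Qed.

Lemma adj_sym S m : (forall x y, m x y = m y x) -> symmetric (adj S m).
Proof. by move=> msym x y; rewrite /adj msym andbCA. Qed.

Lemma comp_sym_eq S m x w : (forall x y, m x y = m y x) ->
  w \in comp S m x -> comp S m x = comp S m w.
Proof.
move=> /(adj_sym S) /sym_connect_sym adj_csym /setIdP [_ xw].
by apply/setP => y; rewrite !inE (same_connect adj_csym xw).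
Qed.

Lemma comp_restrict S S' m m' x : S' \subset S ->
  (forall u v, u \in S' -> m u v = m' u v) ->
  (forall u v, u \in S' -> 0 < m' u v -> v \in S') ->
  x \in S' -> comp S m x = comp S' m' x.
Proof.
move=> /subsetP sS' eqm closedS' xS'; apply/eqP; rewrite eqEsubset.
apply/andP; split; apply: comp_min; rewrite ?comp_self ?sS' //.
- move=> y z _ yU _ yz; have yS' := subsetP (comp_subset S' m' x) y yU.
  by rewrite eqm // in yz; apply: comp_closed yU (closedS' _ _ yS' yz) yz.
- move=> y z xy yU zS' yz; have yS' := subsetP (comp_subset S' m' x) y xy.
  by apply: comp_closed yU (sS' z zS') _; rewrite eqm.
Qed.

Lemma path_exit (e : rel T) (P : pred T) x p : uniq (x :: p) -> path e x p ->
  P x -> ~~ P (last x p) ->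
  exists y z, [/\ e y z, P y, ~~ P z, y \in x :: p & y = x -> z = head x p].
Proof.
elim: p x => [|a p IH] x /=; first by move=> _ _ ->.
move=> /andP [xap uap] /andP [xa ap] Px nPlast; case Pa: (P a); last first.
  by exists x, a; rewrite mem_head Pa.
have [y [z [yz Py nPz yap yx]]] := IH a uap ap Pa nPlast.
exists y, z; split=> //; first by rewrite in_cons yap orbT.
by move=> eq_yx; move: xap; rewrite -eq_yx yap.
Qed.

Lemma cycle_rot_entry (e : rel T) (P : pred T) s : cycle e s ->
  has P s -> ~~ all P s ->
  exists a p, [/\ perm_eq (a :: p) s, cycle e (a :: p), P a & ~~ P (last a p)].
Proof.
move=> cy hasP /allPn [b bs nPb]; have [i q def_q] := rot_to bs.
have hasPq : has P q by move: hasP; rewrite -(has_rot i) def_q /= (negbTE nPb).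
case: (split_find hasPq) def_q => a q1 q2 Pa noPq1 def_q.
exists a, (q2 ++ b :: q1); rewrite last_cat.
have <- : rot (size (b :: q1)) ((b :: q1) ++ a :: q2) = a :: q2 ++ b :: q1.
  exact: rot_size_cat.
have def_s : rot i s = (b :: q1) ++ a :: q2 by rewrite def_q cat_rcons.
rewrite -def_s !perm_rot !rot_cycle cy Pa perm_refl; split=> //=.
have /hasPn : ~~ has P (b :: q1) by rewrite /= negb_or nPb.
by apply; apply: mem_last.
Qed.

Lemma cycle_two_crossings (e : rel T) (P : pred T) s : cycle e s -> uniq s ->
  3 <= size s -> has P s -> ~~ all P s ->
  exists y z y' z', [/\ e y z, e z' y', (y, z) != (y', z'),
                        P y & [/\ ~~ P z, P y' & ~~ P z']].
Proof.
move=> cy us sz hasP nallP.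
have [a [p [pe cyp Pa nPc]]] := cycle_rot_entry cy hasP nallP.
rewrite -(perm_uniq pe) in us; rewrite -(perm_size pe) in sz.
move: cyp; rewrite /= rcons_path => /andP [ap ca].
have [y [z [yz Py nPz _ ya]]] := path_exit us ap Pa nPc.
exists y, z, a, (last a p); split=> //; apply/eqP => -[eq_ya eq_zc].
(* [z] would be both the successor and the predecessor of [a] on the cycle *)
move: eq_zc us sz; rewrite (ya eq_ya).
case: p {pe ap ca nPc ya} => [|b [|c p]] // eq_b us _.
have : b \in c :: p by rewrite [b](eq_b : b = last c p) mem_last.
by move: us => /and3P [_ /negP].
Qed.

Lemma cycle_adj_subset S m s : cycle (adj S m) s -> {subset s <= S}.
Proof. by move=> cy x /(next_cycle cy) /andP []. Qed.

Lemma cycle_has_cycle S S' m s : 3 <= size s -> uniq s ->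
  cycle (adj S m) s -> {subset s <= S'} -> has_cycle S' m.
Proof.
move=> sz us cy sS'; right; right; exists s; split=> //.
apply: (sub_in_cycle (P := mem S')) cy; last by apply/allP.
by move=> x y xS' yS' /and3P [_ _ xy]; rewrite /adj xS' yS' xy.
Qed.

Definition dominated_on (P : pred T) S m S' m' := forall x y,
  x \in S -> y \in S -> 0 < m x y -> P x ->
  [/\ P y, x \in S', y \in S' & m x y <= m' x y].

Lemma path_dominated P S m S' m' a p : dominated_on P S m S' m' ->
  a \in S -> P a -> path (adj S m) a p -> path (adj S' m') a p.
Proof.
move=> dom; elim: p a => [|b p IH] a //= aS Pa /andP [/and3P [_ bS ab] bp].
have [Pb aS' bS' le_ab] := dom a b aS bS ab Pa.
by rewrite /adj aS' bS' (leq_trans ab le_ab) IH.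
Qed.

Lemma has_cycle_transfer S m : has_cycle S m -> exists2 x0, x0 \in S &
  forall P S' m', dominated_on P S m S' m' -> P x0 -> has_cycle S' m'.
Proof.
case=> [[x xS xx] | [[x [y [xS yS xny xy]]] | [[|x p] [//= sz us sS cy]]]].
- exists x => // P S' m' dom Px; have [_ xS' _ le] := dom x x xS xS xx Px.
  by left; exists x; rewrite // (leq_trans xx le).
- exists x => // P S' m' dom Px; have [_ xS' yS' le] := dom x y xS yS (ltnW xy) Px.
  by right; left; exists x, y; rewrite xS' yS' xny (leq_trans xy le).
- have xS := sS x (mem_head x p); exists x => // P S' m' dom Px.
  have cy' : cycle (adj S' m') (x :: p) by apply: path_dominated dom xS Px cy.
  exact: cycle_has_cycle (sz : 3 <= size (x :: p)) us cy' (cycle_adj_subset cy').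
Qed.

Lemma has_cycle_mono S S' m m' : S \subset S' ->
  (forall x y, x \in S -> m x y <= m' x y) -> has_cycle S m -> has_cycle S' m'.
Proof.
move=> /subsetP sS le /has_cycle_transfer [x0 _ transfer].
apply: (transfer predT) => //.
by move=> x y xS yS _ _; rewrite !sS ?le.
Qed.

Lemma is_fvs_restrict S S' m m' X : S' \subset S ->
  (forall x y, x \in S' -> m' x y <= m x y) ->
  is_fvs S m X -> is_fvs S' m' (X :&: S').
Proof.
move=> sS le [_ aX]; split; first exact: subsetIr.
apply: contra_not aX.
apply: has_cycle_mono => [|x y /setDP [xS' _]]; last exact: le.
apply/subsetP => x; rewrite !inE => /andP [+ xS'].
by rewrite xS' (subsetP sS x xS') !andbT.
Qed.

Lemma fvs_ge_union S m A1 A2 m1 m2 k1 k2 : [disjoint A1 & A2] ->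
  A1 \subset S -> A2 \subset S ->
  (forall x y, x \in A1 -> m1 x y <= m x y) ->
  (forall x y, x \in A2 -> m2 x y <= m x y) ->
  fvs_ge A1 m1 k1 -> fvs_ge A2 m2 k2 -> fvs_ge S m (k1 + k2).
Proof.
move=> dA sA1 sA2 le1 le2 ge1 ge2 X fX.
have fX1 := is_fvs_restrict sA1 le1 fX; have fX2 := is_fvs_restrict sA2 le2 fX.
apply: leq_trans (leq_add (ge1 _ fX1) (ge2 _ fX2)) _.
rewrite -cardsUI setIACA setIid (disjoint_setI0 dA) setI0 cards0 addn0.
by rewrite subset_leq_card // subUset !subsetIl.
Qed.

Lemma fvs_is_eq S m m' k : (forall x y, x \in S -> m x y = m' x y) ->
  fvs_is S m' k -> fvs_is S m k.
Proof.
move=> eqm; have fvs_eq m1 m2 : (forall x y, x \in S -> m1 x y = m2 x y) ->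
    forall X, is_fvs S m1 X -> is_fvs S m2 X.
  move=> eqm12 X [sX aX]; split=> //; apply: contra_not aX.
  by apply: has_cycle_mono => // x y /setDP [xS _]; rewrite eqm12.
case=> ge [X fX cX]; split; first by move=> Y /(fvs_eq _ _ eqm); apply: ge.
by exists X => //; apply: fvs_eq fX => x y xS; rewrite eqm.
Qed.

Definition addm m1 m2 : T -> T -> nat := fun x y => m1 x y + m2 x y.

Section DisjointSum.
Variables (A1 A2 : {set T}) (m1 m2 : T -> T -> nat).
Hypothesis A12 : [disjoint A1 & A2].
Hypothesis supp1 : forall x y, 0 < m1 x y -> x \in A1 /\ y \in A1.
Hypothesis supp2 : forall x y, 0 < m2 x y -> x \in A2 /\ y \in A2.

Lemma addm_l x y : x \in A1 -> addm m1 m2 x y = m1 x y.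
Proof.
move=> xA1; rewrite /addm; case: (posnP (m2 x y)) => [-> | /supp2 [xA2 _]].
  exact: addn0.
by rewrite (disjointFr A12 xA1) in xA2.
Qed.

Lemma addm_r x y : x \in A2 -> addm m1 m2 x y = m2 x y.
Proof.
move=> xA2; rewrite /addm; case: (posnP (m1 x y)) => [-> | /supp1 [xA1 _]].
  exact: add0n.
by rewrite (disjointFr A12 xA1) in xA2.
Qed.

Lemma has_cycle_addm S : S \subset A1 :|: A2 -> has_cycle S (addm m1 m2) ->
  has_cycle (S :&: A1) m1 \/ has_cycle (S :&: A2) m2.
Proof.
move=> /subsetP sS /has_cycle_transfer [x0 x0S transfer].
case/setUP: (sS x0 x0S) => x0A; [left | right].
- apply: (transfer [pred u | u \in A1]) => // x y xS yS + /= xA1.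
  by rewrite addm_l // => /supp1 [_ yA1]; rewrite !inE xS yS xA1 yA1.
- apply: (transfer [pred u | u \in A2]) => // x y xS yS + /= xA2.
  by rewrite addm_r // => /supp2 [_ yA2]; rewrite !inE xS yS xA2 yA2.
Qed.

Lemma comp_addm_l x : x \in A1 -> comp (A1 :|: A2) (addm m1 m2) x = comp A1 m1 x.
Proof.
apply: comp_restrict; [exact: subsetUl | exact: addm_l |].
by move=> u v _ /supp1 [].
Qed.

Lemma comp_addm_r x : x \in A2 -> comp (A1 :|: A2) (addm m1 m2) x = comp A2 m2 x.
Proof.
apply: comp_restrict; [exact: subsetUr | exact: addm_r |].
by move=> u v _ /supp2 [].
Qed.

Lemma subgraph_addm S1 S2 m : subgraph S1 m A1 m1 -> subgraph S2 m A2 m2 ->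
  subgraph (S1 :|: S2) m (A1 :|: A2) (addm m1 m2).
Proof.
move=> [sA1 sym1 le1 _] [sA2 sym2 le2 _]; split.
- exact: setUSS.
- by move=> x y; rewrite /addm sym1 sym2.
- move=> x y; case: (posnP (m1 x y)) => [m1_0 | /supp1 [xA1 _]].
    by rewrite /addm m1_0 le2.
  by rewrite addm_l.
- move=> x y; rewrite addn_gt0 => /orP [/supp1 | /supp2] [xA yA];
    by rewrite !inE xA yA ?orbT.
Qed.

Lemma certificate_addm z C1 C2 :
  certificate_of_order z C1 A1 m1 -> certificate_of_order z C2 A2 m2 ->
  certificate_of_order z (C1 :|: C2) (A1 :|: A2) (addm m1 m2).
Proof.
move=> [[sC1 aC1] ge1 comp1] [[sC2 aC2] ge2 comp2]; split.
- split; first exact: setUSS.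
  case/has_cycle_addm=> [|hc1|hc2]; first exact: subsetDl.
    apply/aC1/(has_cycle_mono _ _ hc1) => //; apply/subsetP => x.
    by rewrite !inE negb_or => /andP [/andP [/andP [-> _] _] ->].
  apply/aC2/(has_cycle_mono _ _ hc2) => //; apply/subsetP => x.
  by rewrite !inE negb_or => /andP [/andP [/andP [_ ->] _] ->].
- move=> X fX; apply: leq_trans (leq_card_setU C1 C2).1 _.
  apply: (fvs_ge_union A12 (subsetUl _ _) (subsetUr _ _) _ _ ge1 ge2) fX.
    by move=> x y _; apply: leq_addr.
  by move=> x y _; apply: leq_addl.
- move=> x; case/setUP => xA; [rewrite comp_addm_l | rewrite comp_addm_r] => //.
    have sK := comp_subset A1 m1 x; have [fvsK le_z] := comp1 x xA.
    have dC2K : [disjoint C2 & comp A1 m1 x].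
      by apply: disjointW sC2 sK _; rewrite disjoint_sym.
    rewrite setIUl (disjoint_setI0 dC2K) setU0; split=> //.
    by apply: fvs_is_eq fvsK => u v /(subsetP sK) /addm_l.
  have sK := comp_subset A2 m2 x; have [fvsK le_z] := comp2 x xA.
  have dC1K : [disjoint C1 & comp A2 m2 x] by apply: disjointW sC1 sK A12.
  rewrite setIUl (disjoint_setI0 dC1K) set0U; split=> //.
  by apply: fvs_is_eq fvsK => u v /(subsetP sK) /addm_r.
Qed.

End DisjointSum.

Section AntlerUnion.
Variables (m : T -> T -> nat) (V C1 F1 C2 F2 : {set T}).
Local Notation R1 := (V :\: (C1 :|: F1)).
Hypothesis msym : forall x y, m x y = m y x.
Hypothesis fvc1 : fvc V m C1 F1.
Hypothesis fvc2 : fvc R1 m C2 F2.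

Lemma F2_sub_R1 : F2 \subset R1.
Proof. by case: fvc2 => /(subset_trans (subsetUr C2 F2)). Qed.

Lemma F1_comp_exit_uniq a y z y' z' : a \in F1 ->
  y \in comp F1 m a -> z \in R1 -> y' \in comp F1 m a -> z' \in R1 ->
  0 < m y z -> 0 < m y' z' -> (y, z) = (y', z').
Proof. by case: fvc1 => _ _ _ exit1 /exit1; apply: ecount_le1_edge_eq. Qed.

Lemma acyclic_F1F2 : acyclic (F1 :|: F2) m.
Proof.
have [_ _ acF1 exit1] := fvc1; have [_ _ acF2 _] := fvc2.
have /subsetP F2R1 := F2_sub_R1.
have cross_le1 x y : x \in F1 -> y \in F2 -> m x y <= 1.
  move=> xF1 /F2R1 yR1.
  exact: leq_trans (ecount_ge m (comp_self m xF1) yR1) (exit1 x xF1).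
case=> [[x xF xx] | [[x [y [xF yF xny xy]]] | [s [sz us sF cy]]]].
- by case/setUP: xF => xF; [apply: acF1 | apply: acF2]; left; exists x.
- case/setUP: xF => xF; case/setUP: yF => yF.
  + by apply: acF1; right; left; exists x, y.
  + by move: xy; rewrite ltnNge cross_le1.
  + by move: xy; rewrite msym ltnNge cross_le1.
  + by apply: acF2; right; left; exists x, y.
have [/hasP [a sa aF1] | noF1] := boolP (has (mem F1) s); last first.
  apply: acF2; apply: cycle_has_cycle sz us cy _ => x sx.
  by case/setUP: (sF x sx) => // xF1; case/hasP: noF1; exists x.
set A := comp F1 m a; have /subsetP AF1 : A \subset F1 by apply: comp_subset.
have [allA | nallA] := boolP (all (mem A) s).
  by apply: acF1; apply: cycle_has_cycle sz us cy _ => x /(allP allA) /AF1.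
have hasA : has (mem A) s by apply/hasP; exists a => //; apply: comp_self.
have [y [z [y' [z' [yz z'y' neq yA [zA y'A z'A]]]]]] :=
  cycle_two_crossings cy us sz hasA nallA.
rewrite adj_sym // in z'y'.
have exitR1 u v : u \in A -> v \notin A -> adj (F1 :|: F2) m u v -> v \in R1.
  move=> uA vA /and3P [_ /setUP [vF1 | /F2R1 //] uv].
  by rewrite (comp_closed uA vF1 uv) in vA.
case/eqP: neq; apply: (F1_comp_exit_uniq aF1 yA (exitR1 _ _ yA zA yz) y'A).
- exact: exitR1 y'A z'A z'y'.
- by case/and3P: yz.
- by case/and3P: z'y'.
Qed.

Lemma ecount_comp_F1F2_le1 x : x \in F1 :|: F2 ->
  ecount m (comp (F1 :|: F2) m x) (V :\: ((C1 :|: C2) :|: (F1 :|: F2))) <= 1.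
Proof.
have [_ _ _ exit1] := fvc1; have [_ _ _ exit2] := fvc2.
have /subsetP F2R1 := F2_sub_R1.
rewrite -setUACA -setDDl; set R2 := R1 :\: (C2 :|: F2) => xF.
set K := comp (F1 :|: F2) m x.
have [KF2_0 | /set0Pn [w /setIP [wK wF2]]] := eqVneq (K :&: F2) set0.
  have notF2 y : y \in K -> y \notin F2.
    by move=> yK; apply/negP => yF2; have := in_set0 y; rewrite -KF2_0 inE yK yF2.
  have xF1 : x \in F1.
    by case/setUP: (xF) => // xF2; have := notF2 x (comp_self m xF); rewrite xF2.
  have KF1 : K \subset comp F1 m x.
    apply: comp_min => [|y z yK yA /setUP [zF1 | zF2] yz]; first exact: comp_self.
      exact: comp_closed yA zF1 yz.
    have zF12 : z \in F1 :|: F2 by rewrite inE zF2 orbT.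
    by have := notF2 z (comp_closed yK zF12 yz); rewrite zF2.
  exact: leq_trans (ecount_mono m KF1 (subsetDl _ _)) (exit1 x xF1).
set B := comp F2 m w; have /subsetP BF2 : B \subset F2 by apply: comp_subset.
(* the trees of G[F1] attached to B: their only exit edge ends in B *)
set U1 := [set u in F1 | [exists a in comp F1 m u, exists b in B, 0 < m a b]].
have U1_R2 u r : u \in U1 -> r \in R2 -> m u r = 0.
  case/setIdP=> uF1 /exists_inP [a ua /exists_inP [b bB ab]] /setDP [rR1 rF2].
  apply/eqP; rewrite -leqn0 leqNgt; apply: contraL rF2 => ur.
  have bR1 := F2R1 b (BF2 b bB).
  have [_ <-] := F1_comp_exit_uniq uF1 ua bR1 (comp_self m uF1) rR1 ab ur.
  by rewrite inE BF2 ?orbT.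
have KBU1 : K \subset B :|: U1.
  rewrite /K (comp_sym_eq msym wK).
  apply: comp_min => [|y z _ /setUP [yB | yU1] zF yz].
  - by rewrite inE comp_self.
  - case/setUP: zF => [zF1 | zF2]; last by rewrite inE (comp_closed yB zF2 yz).
    rewrite /U1 !inE zF1 /=; apply/orP; right; apply/exists_inP.
    by exists z; rewrite ?comp_self //; apply/exists_inP; exists y; rewrite // msym.
  - case/setIdP: yU1 => yF1 /exists_inP [a ya /exists_inP [b bB ab]].
    case/setUP: zF => [zF1 | /F2R1 zR1].
      have yz_F1 : z \in comp F1 m y := comp_closed (comp_self m yF1) zF1 yz.
      rewrite /U1 !inE zF1 -(comp_sym_eq msym yz_F1) /=; apply/orP; right.
      by apply/exists_inP; exists a => //; apply/exists_inP; exists b.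
    have bR1 := F2R1 b (BF2 b bB).
    have [_ <-] := F1_comp_exit_uniq yF1 ya bR1 (comp_self m yF1) zR1 ab yz.
    by rewrite inE bB.
apply: leq_trans (ecount_mono m KBU1 (subxx R2)) _.
rewrite /ecount (big_setID B) /= (setIidPr (subsetUl _ _)) [X in _ + X]big1.
  by rewrite addn0; apply: exit2; rewrite BF2 ?comp_self.
move=> u /setDP [/setUP [uB | uU1] uB']; first by rewrite uB in uB'.
by apply: big1 => r /(U1_R2 u r uU1).
Qed.

Lemma fvc_union : fvc V m (C1 :|: C2) (F1 :|: F2).
Proof.
have [sV1 dCF1 _ _] := fvc1; have [/subsetDP [sV2 d21] dCF2 _ _] := fvc2.
split; [ | | exact: acyclic_F1F2 | exact: ecount_comp_F1F2_le1].
  by rewrite -setUACA subUset sV1 sV2.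
have dC1F2 : [disjoint C1 & F2].
  by rewrite disjoint_sym in d21; apply: disjointW d21; rewrite ?subsetUl ?subsetUr.
have dC2F1 : [disjoint C2 & F1].
  by apply: disjointW d21; rewrite ?subsetUl ?subsetUr.
by rewrite -setI_eq0 setIUl !setIUr !disjoint_setI0 ?setU0.
Qed.

End AntlerUnion.

Lemma z_antler_union m V z C1 F1 C2 F2 : (forall x y, m x y = m y x) ->
  z_antler V m z C1 F1 -> z_antler (V :\: (C1 :|: F1)) m z C2 F2 ->
  z_antler V m z (C1 :|: C2) (F1 :|: F2).
Proof.
move=> msym [[fvc1 ge1] [VH1 [mH1 [sub1 cert1]]]].
move=> [[fvc2 ge2] [VH2 [mH2 [sub2 cert2]]]].
have [/subsetDP [_ d21] _ _ _] := fvc2; rewrite disjoint_sym in d21.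
split; first split; first exact: fvc_union.
  move=> X fX; apply: leq_trans (leq_card_setU C1 C2).1 _; rewrite setUACA in fX.
  by apply: (fvs_ge_union d21 (subsetUl _ _) (subsetUr _ _) _ _ ge1 ge2) fX.
have [sVH1 _ _ supp1] := sub1; have [sVH2 _ _ supp2] := sub2.
have dVH : [disjoint VH1 & VH2] := disjointW sVH1 sVH2 d21.
exists (VH1 :|: VH2), (addm mH1 mH2); rewrite setUACA.
by split; [apply: subgraph_addm | apply: certificate_addm].
Qed.

End Antlers.

Theorem proposition27 (T : finType) (m : T -> T -> nat)
  (msym : forall x y, m x y = m y x)
  (z l : nat) (C F : nat -> {set T}) :
  antler_seq [set: T] m z l C F ->
  forall i, 1 <= i <= l ->
    z_antler [set: T] m z (\bigcup_(j < i) C j) (\bigcup_(j < i) F j).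
Proof.
move=> [_ [_ zC]]; elim=> [// | [|i] IH] /andP [_ il].
  by rewrite !big_ord1; have := zC 0 il; rewrite big_ord0 setD0.
rewrite !(big_ord_recr i.+1) /=; apply: z_antler_union msym (IH _) _.
  exact: ltnW.
by rewrite -big_split; apply: zC.
Qed.
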